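(* Let $\rho$ be any single-qubit density matrix and let $\Lambda$ be any incoherent operation (IO) on a qubit. Then there exists a strictly incoherent operation (SIO) $\Lambda'$ on a qubit with $\Lambda'(\rho)=\Lambda(\rho)$. Consequently, for every single-qubit state $\rho$, the set $\{\Lambda(\rho):\Lambda \text{ an IO}\}$ equals the set $\{\Lambda(\rho):\Lambda\text{ an SIO}\}$.
   Context: Fix the computational (incoherent) basis $\{|0\rangle,|1\rangle\}$ of $\mathbb{C}^2$; a state is incoherent if it is diagonal in this basis. An incoherent operation (IO) is a quantum channel with Kraus operators $\{K_n\}$, $\sum_n K_n^\dagger K_n=I$, such that $K_n\delta K_n^\dagger$ is diagonal for every diagonal $\delta$ (equivalently, each $K_n$ has at most one nonzero entry in every column). A strictly incoherent operation (SIO) is an IO whose Kraus operators additionally satisfy that $K_n^\dagger\delta K_n$ is diagonal for every diagonal $\delta$ (equivalently, each $K_n$ has at most one nonzero entry in every row and every column). *)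

(* Complex scalars: any numeric closed field R (e.g. algC). *)
From HB Require Import structures.
From mathcomp Require Import all_boot all_order all_algebra.
Set Implicit Arguments. Unset Strict Implicit. Unset Printing Implicit Defensive.
Import Order.TTheory GRing.Theory Num.Theory.
Local Open Scope ring_scope.

Definition dagger (R : numClosedFieldType) m n (A : 'M[R]_(m, n)) : 'M[R]_(n, m) :=
  (map_mx Num.conj A)^T.

Definition psd (R : numClosedFieldType) n (A : 'M[R]_n) : Prop :=
  dagger A = A /\ forall v : 'cV[R]_n, 0 <= (dagger v *m A *m v) 0 0.

Definition density (R : numClosedFieldType) n (rho : 'M[R]_n) : Prop :=
  psd rho /\ \tr rho = 1.

Definition kraus_apply (R : numClosedFieldType) n (Ks : seq 'M[R]_n) (rho : 'M[R]_n)
  : 'M[R]_n := \sum_(K <- Ks) K *m rho *m dagger K.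

Definition kraus_complete (R : numClosedFieldType) n (Ks : seq 'M[R]_n) : Prop :=
  \sum_(K <- Ks) dagger K *m K = 1%:M.

(* incoherent operation (computational basis = standard basis) *)
Definition IO_kraus (R : numClosedFieldType) n (Ks : seq 'M[R]_n) : Prop :=
  kraus_complete Ks /\
  forall K, K \in Ks -> forall d : 'M[R]_n, is_diag_mx d ->
    is_diag_mx (K *m d *m dagger K).

Definition SIO_kraus (R : numClosedFieldType) n (Ks : seq 'M[R]_n) : Prop :=
  IO_kraus Ks /\
  forall K, K \in Ks -> forall d : 'M[R]_n, is_diag_mx d ->
    is_diag_mx (dagger K *m d *m K).

(* An incoherent Kraus operator on a qubit has at most one nonzero entry in each column.
   If it is not strictly incoherent, some row has two nonzero entries, which forces the
   other row to vanish, so it sends every state to a diagonal matrix.  The operators of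
   this kind therefore contribute a diagonal positive output [E], and their Gram sum
   [D = 1 - (Gram sum of the strictly incoherent ones)] is diagonal, with
   [tr E = tr (D rho)].  This piece is reproduced by the strictly incoherent operators
   [sqrt (p_i D_jj) |i><j|] with weights [p_i = E_ii / tr E]. *)

From HB Require Import structures.
From mathcomp Require Import all_boot all_order all_algebra.
Import Order.TTheory GRing.Theory Num.Theory.
Set Implicit Arguments.
Unset Strict Implicit.
Unset Printing Implicit Defensive.
Local Open Scope ring_scope.

Lemma sum_enum (V : nmodType) (T : finType) (F : T -> V) :
  \sum_(i <- enum T) F i = \sum_i F i.
Proof. by rewrite big_enum. Qed.

Section Dagger.
Variable R : numClosedFieldType.

Lemma daggerE m n (A : 'M[R]_(m, n)) i j : dagger A i j = (A j i)^*.
Proof. by rewrite !mxE. Qed.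

Lemma daggerK m n (A : 'M[R]_(m, n)) : dagger (dagger A) = A.
Proof. by apply/matrixP => i j; rewrite !daggerE conjCK. Qed.

Lemma dagger_delta m n (x : R) (i : 'I_m) (j : 'I_n) :
  dagger (x *: delta_mx i j) = x^* *: delta_mx j i.
Proof. by apply/matrixP => a b; rewrite !mxE rmorphM /= andbC rmorph_nat. Qed.

End Dagger.

Section Incoherent.
Variables (R : numClosedFieldType) (n : nat).
Implicit Types (x : R) (A D K L d rho : 'M[R]_n).

Lemma delta_conjE A (i j k l : 'I_n) :
  delta_mx i j *m A *m delta_mx k l = A j k *: delta_mx i l.
Proof.
rewrite -(mul_delta_mx (0 : 'I_1) i j) -(mul_delta_mx (0 : 'I_1) k l).
rewrite -(mulmxA (delta_mx i 0)) -rowE mulmxA -(mulmxA _ (row j A)) -colE.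
by rewrite [col _ _]mx11_scalar !mxE mul_mx_scalar -scalemxAl mul_delta_mx.
Qed.

Lemma diag_sandwichE K d L a b : is_diag_mx d ->
  (K *m d *m L) a b = \sum_k K a k * d k k * L k b.
Proof.
move=> /is_diag_mxP d_diag; rewrite mxE; apply: eq_bigr => k _.
by rewrite mxE (bigD1 k) //= big1 ?addr0 // => l nlk; rewrite d_diag ?mulr0.
Qed.

Definition incoherent_op K :=
  [forall j, [forall a, [forall b, (a != b) ==> (K a j * K b j == 0)]]].

Lemma incoherent_op_col K : incoherent_op K ->
  forall l a b, a != b -> K a l * K b l = 0.
Proof.
move=> /forallP Kio l a b nab; apply/eqP.
by move: (Kio l) => /forallP/(_ a)/forallP/(_ b)/implyP; apply.
Qed.

Lemma incoherent_opP K :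
  reflect (forall d, is_diag_mx d -> is_diag_mx (K *m d *m dagger K)) (incoherent_op K).
Proof.
apply: (iffP idP) => [Kio d d_diag | Kio].
  apply/is_diag_mxP => a b nab; rewrite diag_sandwichE // big1 // => k _.
  move/eqP: (incoherent_op_col Kio k nab); rewrite daggerE mulf_eq0.
  by case/orP => /eqP ->; rewrite ?conjC0 !(mul0r, mulr0).
apply/forallP => j; apply/forallP => a; apply/forallP => b; apply/implyP => nab.
have /is_diag_mxP/(_ a b nab) := Kio _ (diag_mx_is_diag (delta_mx 0 j)).
rewrite diag_sandwichE ?diag_mx_is_diag // (bigD1 j) //= big1 => [|k /negPf nkj].
  by rewrite !mxE !eqxx mulr1n mulr1 addr0 => /eqP; rewrite mulf_eq0 conjC_eq0 -mulf_eq0.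
by rewrite daggerE !mxE nkj andbF mul0rn mulr0 mul0r.
Qed.

Definition strictly_incoherent_op K := incoherent_op K && incoherent_op (dagger K).

Lemma SIO_krausP (Ks : seq 'M[R]_n) :
  SIO_kraus Ks <-> kraus_complete Ks /\ all strictly_incoherent_op Ks.
Proof.
split=> [[[Kc Kio] Kdio] | [Kc /allP Ksio]].
  split=> //; apply/allP => K KKs; apply/andP; split; apply/incoherent_opP.
    exact: Kio.
  by move=> d /(Kdio K KKs); rewrite daggerK.
have Kio K : K \in Ks -> incoherent_op K by move/Ksio/andP => [].
have Kdio K : K \in Ks -> incoherent_op (dagger K) by move/Ksio/andP => [].
split; first by split=> // K /Kio/incoherent_opP.
by move=> K /Kdio/incoherent_opP Kd d /Kd; rewrite daggerK.
Qed.

Lemma incoherent_delta x (i j : 'I_n) : incoherent_op (x *: delta_mx i j).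
Proof.
apply/forallP => k; apply/forallP => a; apply/forallP => b; apply/implyP => nab.
apply/eqP; rewrite !mxE; have [ai | _] := eqVneq a i; last by rewrite mulr0 mul0r.
by have [bi | _] := eqVneq b i; [rewrite ai bi eqxx in nab | rewrite !mulr0].
Qed.

Lemma strictly_incoherent_delta x (i j : 'I_n) :
  strictly_incoherent_op (x *: delta_mx i j).
Proof. by rewrite /strictly_incoherent_op dagger_delta !incoherent_delta. Qed.

Lemma gram_delta x (i j : 'I_n) :
  dagger (x *: delta_mx i j) *m (x *: delta_mx i j) = (x^* * x) *: delta_mx j j.
Proof. by rewrite dagger_delta -scalemxAl -scalemxAr scalerA mul_delta_mx. Qed.

Lemma kraus_delta x (i j : 'I_n) rho :
  x *: delta_mx i j *m rho *m dagger (x *: delta_mx i j) = (x * x^* * rho j j) *: delta_mx i i.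
Proof.
by rewrite dagger_delta -scalemxAl -scalemxAr -scalemxAl delta_conjE !scalerA (mulrC x^*).
Qed.

Lemma diag_sum_delta A : is_diag_mx A -> A = \sum_i A i i *: delta_mx i i.
Proof.
move=> /is_diag_mxP A_diag; rewrite {1}[A]matrix_sum_delta; apply: eq_bigr => i _.
by rewrite (bigD1 i) //= big1 ?addr0 // => j nji; rewrite A_diag ?scale0r // eq_sym.
Qed.

Lemma is_diag_mx_sum (I : Type) (r : seq I) (P : pred I) (F : I -> 'M[R]_n) :
  (forall i, P i -> is_diag_mx (F i)) -> is_diag_mx (\sum_(i <- r | P i) F i).
Proof.
move=> F_diag; apply: (big_ind (@is_diag_mx _ n n)) => //; first exact: mx0_is_diag.
move=> A B /is_diag_mxP A_diag /is_diag_mxP B_diag.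
by apply/is_diag_mxP => i j nij; rewrite mxE A_diag ?B_diag ?addr0.
Qed.

Lemma mxtrace_diag_mul D rho : is_diag_mx D -> \tr (D *m rho) = \sum_j D j j * rho j j.
Proof.
move=> D_diag; apply: eq_bigr => j _.
rewrite -[D *m rho]mul1mx mulmxA diag_sandwichE // (bigD1 j) //= big1 ?addr0.
  by rewrite mxE eqxx mulr1n mul1r.
by move=> k /negPf nkj; rewrite mxE eq_sym nkj mulr0n !mul0r.
Qed.

Lemma kraus_apply_cat (Ks1 Ks2 : seq 'M[R]_n) rho :
  kraus_apply (Ks1 ++ Ks2) rho = kraus_apply Ks1 rho + kraus_apply Ks2 rho.
Proof. exact: big_cat. Qed.

Lemma psd_sandwich_ge0 K rho i : psd rho -> 0 <= (K *m rho *m dagger K) i i.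
Proof.
move=> [_ rho_ge0]; have := rho_ge0 (dagger (row i K)).
suff -> : (dagger (dagger (row i K)) *m rho *m dagger (row i K)) 0 0
          = (K *m rho *m dagger K) i i by [].
by rewrite daggerK -row_mul !mxE; apply: eq_bigr => k _; rewrite /row !daggerE !mxE.
Qed.

Lemma gram_diag_ge0 K i : 0 <= (dagger K *m K) i i.
Proof. by rewrite mxE; apply: sumr_ge0 => k _; rewrite daggerE mulrC mul_conjC_ge0. Qed.

Lemma conj_sqrtC_mul x : 0 <= x -> (sqrtC x)^* * sqrtC x = x.
Proof. by move=> x_ge0; rewrite geC0_conj ?sqrtC_ge0 // -expr2 sqrtCK. Qed.

Definition measure_prepare (p : 'I_n -> R) D : seq 'M[R]_n :=
  [seq sqrtC (p i * D j j) *: delta_mx i j | i <- enum 'I_n, j <- enum 'I_n].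

Lemma measure_prepare_strictly_incoherent p D :
  all strictly_incoherent_op (measure_prepare p D).
Proof. by apply/all_allpairsP => i j _ _; apply: strictly_incoherent_delta. Qed.

Section MeasurePrepare.
Variables (p : 'I_n -> R) (D : 'M[R]_n).
Hypotheses (p_ge0 : forall i, 0 <= p i) (D_ge0 : forall j, 0 <= D j j).

Lemma gram_measure_prepare :
  \sum_(K <- measure_prepare p D) dagger K *m K = (\sum_i p i) *: \sum_j D j j *: delta_mx j j.
Proof.
rewrite big_allpairs_dep sum_enum scaler_suml; apply: eq_bigr => i _.
rewrite sum_enum scaler_sumr; apply: eq_bigr => j _.
by rewrite gram_delta conj_sqrtC_mul ?mulr_ge0 // scalerA.
Qed.

Lemma kraus_apply_measure_prepare rho :
  kraus_apply (measure_prepare p D) rho = (\sum_j D j j * rho j j) *: \sum_i p i *: delta_mx i i.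
Proof.
rewrite /kraus_apply big_allpairs_dep sum_enum scaler_sumr; apply: eq_bigr => i _.
rewrite sum_enum scalerA mulr_suml scaler_suml; apply: eq_bigr => j _.
by rewrite kraus_delta [sqrtC _ * _]mulrC conj_sqrtC_mul ?mulr_ge0 // -mulrA mulrC.
Qed.

End MeasurePrepare.

End Incoherent.

Arguments strictly_incoherent_op {R n}.

Lemma convex_weights (R : numFieldType) n (e : 'I_n.+1 -> R) : (forall i, 0 <= e i) ->
  exists p : 'I_n.+1 -> R,
    [/\ forall i, 0 <= p i, \sum_i p i = 1 & forall i, e i = p i * \sum_k e k].
Proof.
move=> e_ge0; have [S0 | S_neq0] := eqVneq (\sum_k e k) 0.
  exists (fun i => (i == ord0)%:R); split=> [i | | i]; first exact: ler0n.
    by rewrite (bigD1 ord0) //= big1 ?addr0 // => i /negPf ->.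
  by rewrite S0 mulr0; apply: (psumr_eq0P _ S0).
exists (fun i => e i / \sum_k e k); split=> [i | | i].
- by apply: divr_ge0 => //; apply: sumr_ge0.
- by rewrite -mulr_suml divff.
- by rewrite divfK.
Qed.

Section Reduction.
Variables (R : numClosedFieldType) (n : nat).
Implicit Types (D E rho : 'M[R]_n.+1) (Ks : seq 'M[R]_n.+1).

Lemma measure_prepare_realizes rho D E :
  is_diag_mx D -> is_diag_mx E -> (forall j, 0 <= D j j) -> (forall i, 0 <= E i i) ->
  \tr E = \tr (D *m rho) ->
  exists Ks, [/\ all strictly_incoherent_op Ks, \sum_(K <- Ks) dagger K *m K = D
               & kraus_apply Ks rho = E].
Proof.
move=> D_diag E_diag D_ge0 E_ge0 trE.
have [p [p_ge0 p_sum1 E_p]] := convex_weights E_ge0.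
exists (measure_prepare p D); split.
- exact: measure_prepare_strictly_incoherent.
- by rewrite gram_measure_prepare // p_sum1 scale1r -diag_sum_delta.
rewrite kraus_apply_measure_prepare // -mxtrace_diag_mul // -trE.
by rewrite [RHS]diag_sum_delta // scaler_sumr; apply: eq_bigr => i _; rewrite scalerA E_p mulrC.
Qed.

Lemma SIO_kraus_of_diag_remainder rho Ks :
  psd rho -> kraus_complete Ks ->
  is_diag_mx (kraus_apply [seq K <- Ks | ~~ strictly_incoherent_op K] rho) ->
  exists Ks', SIO_kraus Ks' /\ kraus_apply Ks' rho = kraus_apply Ks rho.
Proof.
move=> rho_psd Ks_complete E_diag.
set Kin := [seq K <- Ks | strictly_incoherent_op K].
set Kout := [seq K <- Ks | ~~ strictly_incoherent_op K].
have sum_split (F : 'M[R]_n.+1 -> 'M[R]_n.+1) :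
    \sum_(K <- Ks) F K = \sum_(K <- Kin) F K + \sum_(K <- Kout) F K.
  by rewrite (bigID strictly_incoherent_op) /= !big_filter.
set E := kraus_apply Kout rho; set D := \sum_(K <- Kout) dagger K *m K.
have Kin_sio : all strictly_incoherent_op Kin by apply: filter_all.
have D_def : D = 1%:M - \sum_(K <- Kin) dagger K *m K.
  by rewrite -Ks_complete /kraus_complete sum_split addrAC subrr add0r.
have Din_diag : is_diag_mx (\sum_(K <- Kin) dagger K *m K).
  rewrite big_seq; apply: is_diag_mx_sum => K /(allP Kin_sio)/andP [_ /incoherent_opP Kd].
  by have := Kd _ (scalar_mx_is_diag _ 1); rewrite mulmx1 daggerK.
have D_diag : is_diag_mx D.
  apply/is_diag_mxP => i j nij.
  have /negPf ij_false : i != j := nij.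
  by rewrite D_def !mxE ij_false (is_diag_mxP Din_diag) // subr0.
have D_ge0 j : 0 <= D j j by rewrite summxE; apply: sumr_ge0 => K _; apply: gram_diag_ge0.
have E_ge0 i : 0 <= E i i by rewrite summxE; apply: sumr_ge0 => K _; apply: psd_sandwich_ge0.
have trE : \tr E = \tr (D *m rho).
  rewrite mulmx_suml !raddf_sum; apply: eq_bigr => K _.
  by rewrite /= mxtrace_mulC !mulmxA.
have [Ks' [Ks'_sio Ks'_gram Ks'_out]] := measure_prepare_realizes D_diag E_diag D_ge0 E_ge0 trE.
exists (Kin ++ Ks'); split.
  apply/SIO_krausP; split; last by rewrite all_cat Kin_sio Ks'_sio.
  by rewrite /kraus_complete big_cat /= Ks'_gram D_def addrCA subrr addr0.
by rewrite kraus_apply_cat Ks'_out /kraus_apply sum_split.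
Qed.

End Reduction.

Lemma ord2_cover (a b c : 'I_2) : a != b -> c = a \/ c = b.
Proof.
case: a b c => [[|[|?]] ?] [[|[|?]] ?] [[|[|?]] ?] //= _;
  by [left; apply: val_inj | right; apply: val_inj].
Qed.

Section Qubit.
Variable R : numClosedFieldType.
Implicit Types (K rho : 'M[R]_2).

Lemma qubit_zero_row K : incoherent_op K -> ~~ incoherent_op (dagger K) ->
  exists i, forall l, K i l = 0.
Proof.
move=> /incoherent_op_col Kcol; rewrite negb_forall => /existsP [j].
rewrite negb_forall => /existsP [a]; rewrite negb_forall => /existsP [b].
rewrite negb_imply !daggerE -rmorphM conjC_eq0 mulf_eq0 negb_or => /andP [nab /andP [Kja Kjb]].
exists (lift j ord0) => l.
have /eqP : K (lift j ord0) l * K j l = 0 by apply: Kcol; rewrite eq_sym neq_lift.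
rewrite mulf_eq0 => /orP [/eqP // | Kjl]; case: (ord2_cover l nab) => eq_l.
  by rewrite -eq_l Kjl in Kja.
by rewrite -eq_l Kjl in Kjb.
Qed.

Lemma qubit_sandwich_diag K rho : incoherent_op K -> ~~ incoherent_op (dagger K) ->
  is_diag_mx (K *m rho *m dagger K).
Proof.
move=> Kio Kdio; have [i Ki0] := qubit_zero_row Kio Kdio.
apply/is_diag_mxP => a b nab; rewrite mxE big1 // => k _.
have [<- | <-] := ord2_cover i nab.
  by rewrite mxE big1 ?mul0r // => l _; rewrite Ki0 mul0r.
by rewrite daggerE Ki0 conjC0 mulr0.
Qed.

End Qubit.

Theorem theorem1 (R : numClosedFieldType) (rho : 'M[R]_2) :
  density rho ->
  (forall Ks : seq 'M[R]_2, IO_kraus Ks ->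
     exists Ks' : seq 'M[R]_2, SIO_kraus Ks' /\ kraus_apply Ks' rho = kraus_apply Ks rho)
  /\
  (forall sigma : 'M[R]_2,
     (exists Ks : seq 'M[R]_2, IO_kraus Ks /\ kraus_apply Ks rho = sigma) <->
     (exists Ks : seq 'M[R]_2, SIO_kraus Ks /\ kraus_apply Ks rho = sigma)).
Proof.
move=> [rho_psd _].
have IO_SIO Ks : IO_kraus Ks ->
    exists Ks', SIO_kraus Ks' /\ kraus_apply Ks' rho = kraus_apply Ks rho.
  move=> [Ks_complete Ks_io]; apply: SIO_kraus_of_diag_remainder => //.
  rewrite /kraus_apply big_filter big_seq_cond; apply: is_diag_mx_sum => K /andP [KKs].
  have Kio : incoherent_op K by apply/incoherent_opP; exact: Ks_io.
  by rewrite negb_and Kio => Kdio; apply: qubit_sandwich_diag.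
split=> // sigma; split=> [[Ks [/IO_SIO [Ks' [Ks'_sio <-]] <-]] | [Ks [[Ks_io _] <-]]].
  by exists Ks'.
by exists Ks.
Qed.
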